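(* Let $n\geq1$ be an integer and $z\in\mathbb{C}$ with $|z|<1$ and $|1-z|\left(n+\frac12\right)<1$. Then \[ \left|\sum_{k=n+1}^\infty\frac{z^k}{k}\right|< |z|^{n+1}\left(-\log\left(|1-z|\left(n+\frac{1}{2}\right)\right)+C_3\right),\qquad C_3=\sqrt{(\pi/2)^2+1}. \] *)

From Stdlib Require Import Reals.
From Coquelicot Require Export Coquelicot.
Open Scope R_scope.

Definition C3 : R := sqrt ((PI / 2) ^ 2 + 1).

(* the k-th term (k >= 0) of the tail  sum_{j=n+1}^oo z^j / j , j = n+1+k *)
Definition tail_term (n : nat) (z : C) (k : nat) : C :=
  Cdiv (Cpow z (n + 1 + k)) (RtoC (INR (n + 1 + k))).

From Stdlib Require Import Reals Lra Lia ZArith.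
From Coquelicot Require Import Coquelicot.
Open Scope R_scope.

(* Write c = |1 - z| and split the tail at an index N with 2 < c (N + 1/2) <= 8/3.
   The terms with n < k <= N are bounded by |z|^(n+1)/k, and comparing 1/k with the
   integral of 1/t over [k - 1/2, k + 1/2] bounds their sum by ln((N + 1/2)/(n + 1/2)).
   For the terms with k > N, Abel summation against the decreasing weights 1/k gives
   c |sum_(k > N) z^k/k| <= 2 |z|^(N+1)/(N+1).  With y = c (N + 1/2) the total is at most
   |z|^(n+1) (-ln(c (n + 1/2)) + ln y + 2/y), and ln y + 2/y <= 7/4 < C3 on [2, 8/3]. *)

Lemma inv_le_ln_shift_half (k : R) : / 2 < k -> / k <= ln (k + / 2) - ln (k - / 2).
Proof.
  intros Hk.
  set (f := fun t => ln (k + t) - ln (k - t) - 2 * t / k).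
  set (f' := fun t => / (k + t) + / (k - t) - 2 / k).
  destruct (MVT_cor2 f f' 0 (/ 2)) as [c [Hc Hc_range]]; [lra | |].
  { intros t Ht. apply is_derive_Reals. unfold f, f'.
    auto_derive; [repeat split; lra | field; repeat split; lra]. }
  assert (Hf'c : 0 <= f' c).
  { unfold f'.
    replace (/ (k + c) + / (k - c) - 2 / k) with (2 * c * c / (k * (k + c) * (k - c)))
      by (field; lra).
    apply Rle_mult_inv_pos; [nra |].
    apply Rmult_lt_0_compat; [nra | lra]. }
  assert (Hf0 : f 0 = 0) by (unfold f; rewrite Rplus_0_r, Rminus_0_r; field; lra).
  unfold f in Hc, Hf0.
  replace (2 * / 2 / k) with (/ k) in Hc by (field; lra).
  nra.
Qed.

Lemma sum_inv_le_ln (n m : nat) :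
  sum_n (fun j => / INR (n + 1 + j)) m <= ln (INR (n + 1 + m) + / 2) - ln (INR n + / 2).
Proof.
  assert (Hstep : forall k : nat,
             / INR (S k) <= ln (INR (S k) + / 2) - ln (INR k + / 2)).
  { intros k. rewrite S_INR.
    replace (INR k + / 2) with (INR k + 1 - / 2) by lra.
    apply inv_le_ln_shift_half. pose proof (pos_INR k). lra. }
  induction m as [| m IH].
  - rewrite sum_O, Nat.add_0_r, Nat.add_1_r. apply Hstep.
  - rewrite sum_Sn. change plus with Rplus.
    replace (n + 1 + S m)%nat with (S (n + 1 + m)) by lia.
    pose proof (Hstep (n + 1 + m)%nat). lra.
Qed.

Lemma ln_add_two_div_le (y : R) : 2 <= y <= 8 / 3 -> ln y + 2 / y <= 7 / 4.
Proof.
  intros Hy.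
  assert (He : 8 / 3 <= exp 1).
  { pose proof (exp_ge_taylor 1 4 ltac:(lra)) as H. simpl in H. lra. }
  (* ln y <= y / e is the tangent line of ln at e; 3y/8 + 2/y <= 7/4 is (3y - 8)(y - 2) <= 0. *)
  assert (Hln : ln y <= y / exp 1).
  { pose proof (exp_ineq1_le (ln y - 1)) as H.
    unfold Rminus in H. rewrite exp_plus, exp_Ropp, exp_ln in H by lra.
    unfold Rdiv. lra. }
  assert (Hdiv : y / exp 1 <= 3 / 8 * y).
  { assert (/ exp 1 <= / (8 / 3)) by (apply Rinv_le_contravar; lra).
    unfold Rdiv. nra. }
  assert (Hquad : 3 / 8 * y + 2 / y <= 7 / 4).
  { apply (Rmult_le_reg_r y); [lra |].
    replace ((3 / 8 * y + 2 / y) * y) with (3 / 8 * y * y + 2) by (field; lra).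
    nra. }
  lra.
Qed.

Lemma C3_gt_7_4 : 7 / 4 < C3.
Proof.
  unfold C3. pose proof PI2_3_2.
  rewrite <- (sqrt_pow2 (7 / 4)) by lra.
  apply sqrt_lt_1_alt. nra.
Qed.

Lemma exists_nat_scaled_half_between (a c : R) :
  0 <= a -> 0 < c -> exists N : nat, a < c * (INR N + / 2) <= a + c.
Proof.
  intros Ha Hc.
  assert (Hx : 0 <= a / c) by (apply Rdiv_le_0_compat; lra).
  destruct (archimed (a / c - / 2)) as [Hup_gt Hup_le].
  assert (Hup : (-1 < up (a / c - / 2))%Z) by (apply lt_IZR; lra).
  exists (Z.to_nat (up (a / c - / 2))).
  rewrite INR_IZR_INZ, Z2Nat.id by lia.
  set (u := IZR (up (a / c - / 2))) in *.
  replace a with (c * (a / c)) by (field; lra).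
  split.
  - apply Rmult_lt_compat_l; lra.
  - replace (c * (a / c) + c) with (c * (a / c + 1)) by ring.
    apply Rmult_le_compat_l; lra.
Qed.

Lemma norm_le_of_is_series {K : AbsRing} {V : NormedModule K} (a : nat -> V) (l : V) (B : R) :
  is_series a l -> (forall m, norm (sum_n a m) <= B) -> norm l <= B.
Proof.
  intros Hl Hle.
  assert (Hlim : is_lim_seq (fun m => norm (sum_n a m)) (norm l)).
  { eapply filterlim_comp; [exact Hl | apply filterlim_norm]. }
  exact (is_lim_seq_le _ _ _ _ Hle Hlim (is_lim_seq_const B)).
Qed.

Lemma is_series_shift {K : AbsRing} {V : NormedModule K} (a : nat -> V) (l : V) (M : nat) :
  is_series a l -> is_series (fun k => a (S M + k)%nat) (minus l (sum_n a M)).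
Proof.
  intros Hl. apply is_series_incr_n; [lia |]. simpl. unfold minus.
  rewrite <- plus_assoc, (plus_opp_l (G := V)), plus_zero_r. exact Hl.
Qed.

Lemma pow_le_pow_of_le_1 (r : R) (m k : nat) : 0 <= r <= 1 -> (m <= k)%nat -> r ^ k <= r ^ m.
Proof.
  intros Hr Hmk. replace k with (m + (k - m))%nat by lia. rewrite pow_add.
  pose proof (pow_le r m (proj1 Hr)).
  pose proof (pow_incr r 1 (k - m) Hr). rewrite pow1 in *. nra.
Qed.

Lemma Cmod_abel_sum_le (a : nat -> R) (z : C) (L : nat) :
  (forall j, 0 <= a (S j) <= a j) -> Cmod z <= 1 ->
  Cmod (1 - z) * Cmod (sum_n (fun j => RtoC (a j) * z ^ j)%C L) <= 2 * a O.
Proof.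
  intros Ha Hz.
  assert (Ha_nonneg : forall j, 0 <= a j)
    by (intros [| j]; [specialize (Ha O) | specialize (Ha j)]; lra).
  (* Multiplying by 1 - z telescopes: the invariant expression equals
     a 0 - sum_(j < k) (a j - a (S j)) z^(S j). *)
  assert (Hsum : forall k, Cmod ((1 - z) * sum_n (fun j => RtoC (a j) * z ^ j)%C k
                                 + RtoC (a k) * z ^ S k)%C <= 2 * a O - a k).
  { induction k as [| k IH].
    - rewrite sum_O. simpl Cpow.
      replace ((1 - z) * (RtoC (a O) * 1) + RtoC (a O) * (z * 1))%C with (RtoC (a O)) by ring.
      rewrite Cmod_R, Rabs_pos_eq by apply Ha_nonneg. lra.
    - rewrite sum_Sn. change plus with Cplus.
      set (E := ((1 - z) * sum_n (fun j => RtoC (a j) * z ^ j)%C k + RtoC (a k) * z ^ S k)%C) in IH.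
      replace ((1 - z) * (sum_n (fun j => RtoC (a j) * z ^ j)%C k + RtoC (a (S k)) * z ^ S k)
               + RtoC (a (S k)) * z ^ S (S k))%C
        with (E - RtoC (a k - a (S k)) * z ^ S k)%C
        by (unfold E; rewrite RtoC_minus; simpl Cpow; ring).
      eapply Rle_trans; [apply Cmod_triangle |].
      rewrite Cmod_opp, Cmod_mult, Cmod_R, Cmod_pow, Rabs_pos_eq by (specialize (Ha k); lra).
      pose proof (pow_incr (Cmod z) 1 (S k) (conj (Cmod_ge_0 z) Hz)). rewrite pow1 in *.
      specialize (Ha k). nra. }
  rewrite <- Cmod_mult.
  replace ((1 - z) * sum_n (fun j => RtoC (a j) * z ^ j)%C L)%C
    with (((1 - z) * sum_n (fun j => RtoC (a j) * z ^ j)%C L + RtoC (a L) * z ^ S L)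
          - RtoC (a L) * z ^ S L)%C by ring.
  eapply Rle_trans; [apply Cmod_triangle |].
  rewrite Cmod_opp, Cmod_mult, Cmod_R, Cmod_pow, Rabs_pos_eq by apply Ha_nonneg.
  pose proof (Hsum L).
  pose proof (pow_incr (Cmod z) 1 (S L) (conj (Cmod_ge_0 z) Hz)). rewrite pow1 in *.
  pose proof (Ha_nonneg L). nra.
Qed.

Lemma tail_term_factor (n : nat) (z : C) (j : nat) :
  tail_term n z j = (z ^ (n + 1) * (RtoC (/ INR (n + 1 + j)) * z ^ j))%C.
Proof.
  unfold tail_term, Cdiv. rewrite Cpow_add_r, RtoC_inv; [ring |].
  apply not_0_INR. lia.
Qed.

Lemma Cmod_tail_term (n : nat) (z : C) (j : nat) :
  Cmod (tail_term n z j) = Cmod z ^ (n + 1 + j) / INR (n + 1 + j).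
Proof.
  assert (Hpos : 0 < INR (n + 1 + j)) by (apply lt_0_INR; lia).
  unfold tail_term. rewrite Cmod_div, Cmod_pow, Cmod_R, Rabs_pos_eq; [reflexivity | lra |].
  intros E. apply RtoC_inj in E. lra.
Qed.

Lemma tail_term_shift (n M : nat) (z : C) (k : nat) :
  tail_term n z (S M + k) = tail_term (n + S M) z k.
Proof. unfold tail_term. now replace (n + 1 + (S M + k))%nat with (n + S M + 1 + k)%nat by lia. Qed.

Lemma Cmod_sum_tail_term_le_harmonic (n : nat) (z : C) (m : nat) :
  Cmod z <= 1 ->
  Cmod (sum_n (tail_term n z) m) <= Cmod z ^ (n + 1) * sum_n (fun j => / INR (n + 1 + j)) m.
Proof.
  intros Hz.
  eapply Rle_trans; [apply (norm_sum_n_m (V := C_NormedModule)) |].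
  rewrite <- (sum_n_mult_l (K := R_Ring)). apply sum_n_m_le. intros j.
  change (norm (tail_term n z j)) with (Cmod (tail_term n z j)).
  rewrite Cmod_tail_term. unfold Rdiv. apply Rmult_le_compat_r.
  - left. apply Rinv_0_lt_compat, lt_0_INR. lia.
  - apply pow_le_pow_of_le_1; [split; [apply Cmod_ge_0 | exact Hz] | lia].
Qed.

Lemma Cmod_sum_tail_term_le_abel (n : nat) (z : C) (L : nat) :
  Cmod z <= 1 ->
  Cmod (1 - z) * Cmod (sum_n (tail_term n z) L) <= 2 * Cmod z ^ (n + 1) / INR (n + 1).
Proof.
  intros Hz.
  rewrite (sum_n_ext _ _ L (tail_term_factor n z)), (sum_n_mult_l (K := C_Ring)).
  change mult with Cmult. rewrite Cmod_mult, Cmod_pow.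
  assert (Habel : Cmod (1 - z) * Cmod (sum_n (fun j => RtoC (/ INR (n + 1 + j)) * z ^ j)%C L)
                  <= 2 * / INR (n + 1 + 0)).
  { apply Cmod_abel_sum_le; [| exact Hz].
    intros j. split.
    - left. apply Rinv_0_lt_compat, lt_0_INR. lia.
    - apply Rinv_le_contravar; [apply lt_0_INR; lia | apply le_INR; lia]. }
  rewrite Nat.add_0_r in Habel.
  assert (Hpow : 0 <= Cmod z ^ (n + 1)) by (apply pow_le, Cmod_ge_0).
  apply (Rle_trans _ (Cmod z ^ (n + 1) * (2 * / INR (n + 1)))).
  - rewrite <- Rmult_assoc, (Rmult_comm (Cmod (1 - z))), Rmult_assoc.
    apply Rmult_le_compat_l; [exact Hpow | exact Habel].
  - right. unfold Rdiv. ring.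
Qed.

Lemma ex_series_tail_term (n : nat) (z : C) :
  Cmod z < 1 -> ex_series (K := C_AbsRing) (V := C_CompleteNormedModule) (tail_term n z).
Proof.
  intros Hz.
  apply (ex_series_le _ (fun j => Cmod z ^ (n + 1) * Cmod z ^ j)).
  - intros j. change (norm (tail_term n z j)) with (Cmod (tail_term n z j)).
    rewrite Cmod_tail_term, <- pow_add.
    assert (H1 : 1 <= INR (n + 1 + j)) by (apply (le_INR 1); lia).
    pose proof (pow_le (Cmod z) (n + 1 + j) (Cmod_ge_0 z)).
    assert (/ INR (n + 1 + j) <= 1) by (rewrite <- Rinv_1; apply Rinv_le_contravar; lra).
    unfold Rdiv. nra.
  - apply (ex_series_scal_l (V := R_NormedModule)), ex_series_geom.
    rewrite Rabs_pos_eq by apply Cmod_ge_0. exact Hz.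
Qed.

Lemma Cmod_series_tail_term_le_abel (n : nat) (z l : C) :
  Cmod z <= 1 -> z <> RtoC 1 ->
  is_series (K := C_AbsRing) (V := C_NormedModule) (tail_term n z) l ->
  Cmod l <= 2 * Cmod z ^ (n + 1) / (INR (n + 1) * Cmod (1 - z)).
Proof.
  intros Hz Hz1 Hl.
  assert (Hc : 0 < Cmod (1 - z)) by (apply Cmod_gt_0, Cminus_eq_contra; congruence).
  assert (Hn : 0 < INR (n + 1)) by (apply lt_0_INR; lia).
  apply (norm_le_of_is_series _ _ _ Hl). intros L.
  change (norm (sum_n (tail_term n z) L)) with (Cmod (sum_n (tail_term n z) L)).
  apply (Rmult_le_reg_l (Cmod (1 - z))); [exact Hc |].
  replace (Cmod (1 - z) * (2 * Cmod z ^ (n + 1) / (INR (n + 1) * Cmod (1 - z))))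
    with (2 * Cmod z ^ (n + 1) / INR (n + 1)) by (field; lra).
  apply Cmod_sum_tail_term_le_abel, Hz.
Qed.

Lemma Cmod_series_tail_term_le (n N : nat) (z l : C) :
  (n < N)%nat -> Cmod z <= 1 -> z <> RtoC 1 ->
  is_series (K := C_AbsRing) (V := C_NormedModule) (tail_term n z) l ->
  Cmod l <= Cmod z ^ (n + 1) *
            (ln (INR N + / 2) - ln (INR n + / 2) + 2 / (Cmod (1 - z) * (INR N + / 2))).
Proof.
  intros HnN Hz Hz1 Hl.
  set (M := (N - n - 1)%nat).
  assert (HN : N = (n + 1 + M)%nat) by lia.
  assert (Hc : 0 < Cmod (1 - z)) by (apply Cmod_gt_0, Cminus_eq_contra; congruence).
  set (head := sum_n (tail_term n z) M).
  assert (Hhead : Cmod head <= Cmod z ^ (n + 1) * (ln (INR N + / 2) - ln (INR n + / 2))).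
  { eapply Rle_trans; [apply Cmod_sum_tail_term_le_harmonic, Hz |].
    apply Rmult_le_compat_l; [apply pow_le, Cmod_ge_0 |].
    rewrite HN. apply sum_inv_le_ln. }
  assert (Hrest : Cmod (minus l head)
                  <= 2 * Cmod z ^ (n + S M + 1) / (INR (n + S M + 1) * Cmod (1 - z))).
  { apply Cmod_series_tail_term_le_abel; [exact Hz | exact Hz1 |].
    apply (is_series_ext (fun k => tail_term n z (S M + k))); [apply tail_term_shift |].
    exact (is_series_shift _ _ M Hl). }
  assert (Hrest_le : 2 * Cmod z ^ (n + S M + 1) / (INR (n + S M + 1) * Cmod (1 - z))
                     <= 2 * Cmod z ^ (n + 1) / (Cmod (1 - z) * (INR N + / 2))).
  { assert (Hpow : Cmod z ^ (n + S M + 1) <= Cmod z ^ (n + 1))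
      by (apply pow_le_pow_of_le_1; [split; [apply Cmod_ge_0 | exact Hz] | lia]).
    assert (HNle : INR N + / 2 <= INR (n + S M + 1))
      by (rewrite HN; replace (n + S M + 1)%nat with (S (n + 1 + M)) by lia; rewrite S_INR; lra).
    pose proof (pos_INR N).
    unfold Rdiv. apply Rmult_le_compat.
    - pose proof (pow_le _ (n + S M + 1) (Cmod_ge_0 z)). lra.
    - left. apply Rinv_0_lt_compat. nra.
    - lra.
    - apply Rinv_le_contravar; nra. }
  replace l with (head + minus l head)%C
    by (unfold minus; change plus with Cplus; change opp with Copp; ring).
  eapply Rle_trans; [apply Cmod_triangle |].
  unfold Rdiv in *. lra.
Qed.

Theorem theorem7 (n : nat) (z : C) :
  (1 <= n)%nat ->
  Cmod z < 1 ->
  Cmod (Cminus (RtoC 1) z) * (INR n + 1 / 2) < 1 ->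
  exists S : C,
    is_series (K := C_AbsRing) (V := C_NormedModule) (tail_term n z) S /\
    Cmod S < (Cmod z) ^ (n + 1) *
             (- ln (Cmod (Cminus (RtoC 1) z) * (INR n + 1 / 2)) + C3).
Proof.
  intros Hn Hz Hcn.
  replace (1 / 2) with (/ 2) in * by lra.
  assert (Hn1 : 1 <= INR n) by (apply (le_INR 1); exact Hn).
  assert (Hz1 : z <> RtoC 1) by (intros ->; rewrite Cmod_1 in Hz; lra).
  assert (Hc : 0 < Cmod (1 - z)) by (apply Cmod_gt_0, Cminus_eq_contra; congruence).
  assert (Hr : 0 < Cmod z).
  { apply Cmod_gt_0. intros ->.
    replace (1 - 0)%C with (RtoC 1) in Hcn by ring. rewrite Cmod_1 in Hcn. lra. }
  assert (Hc_small : Cmod (1 - z) <= 2 / 3) by nra.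
  destruct (exists_nat_scaled_half_between 2 (Cmod (1 - z))) as [N [HN_lo HN_hi]];
    [lra | exact Hc |].
  assert (HnN : (n < N)%nat).
  { apply INR_lt, (Rmult_lt_reg_l (Cmod (1 - z))); [exact Hc | lra]. }
  destruct (ex_series_tail_term n z Hz) as [l Hl].
  exists l. split; [exact Hl |].
  eapply Rle_lt_trans;
    [exact (Cmod_series_tail_term_le n N z l HnN (Rlt_le _ _ Hz) Hz1 Hl) |].
  apply Rmult_lt_compat_l; [apply pow_lt, Hr |].
  assert (Hln : ln (Cmod (1 - z) * (INR N + / 2)) + 2 / (Cmod (1 - z) * (INR N + / 2)) <= 7 / 4)
    by (apply ln_add_two_div_le; lra).
  pose proof (pos_INR n). pose proof (pos_INR N).
  rewrite ln_mult in Hln |- * by lra.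
  pose proof C3_gt_7_4. lra.
Qed.
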